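(* In the single-block Spice setting, fix $t>0$ and run iterations $k=0,1,\dots,t$ with a constant scaling factor $\rho=\rho(t)>0$, where for every $k=1,\dots,t$ $$\eta_k\ \ge\ \max\Big\{\eta_{k-1}\sqrt{\tfrac{\mathsf{R}(x^k)}{\mathsf{R}(x^{k-1})}},\ \ \eta_{k-1}\,\tfrac{\mathsf{R}(\bar x^k)\sqrt{\mathsf{R}(x^{k-1})}}{\mathsf{R}(\bar x^{k-1})\sqrt{\mathsf{R}(x^k)}}\Big\}.$$ Define $\bar x_t=\frac{1}{t+1}\sum_{k=0}^t\bar x^k$, $\eta_t^{\mathrm{avg}}=\frac{t+1}{\sum_{k=0}^t 1/\eta_k}$ and $\bar w_t=\frac{\sum_{k=0}^t\bar w^k/\eta_k}{\sum_{k=0}^t1/\eta_k}$. Then $\bar w_t\in\Omega$ and for every $w^*=(x^*,\lambda^* )\in\Omega$, $$f(\bar x_t)-f(x^* )+(\bar w_t-w^* )^\top\frac{1}{\eta_t^{\mathrm{avg}}\rho(t)}\Gamma(w^* )\ \le\ \frac{1}{2\eta_0\rho(t)(t+1)}\|w^*-w^0\|_{\mathsf{H}_0}^2,$$ where $\mathsf{H}_0=\begin{pmatrix}\sqrt{\mathsf{R}(x^0)}\,I_n&0\\0&\frac{\mu\mathsf{R}(\bar x^0)}{\sqrt{\mathsf{R}(x^0)}}I_p\end{pmatrix}$ (so that $H_0=\frac{1}{\eta_0}\mathsf{H}_0$).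
   Context: Single-block Spice setting. Let $\mathcal{X}\subseteq\mathbb{R}^n$ be nonempty closed convex, $f:\mathbb{R}^n\to\mathbb{R}$ convex, $\phi_1,\dots,\phi_p:\mathbb{R}^n\to\mathbb{R}$ convex and continuously differentiable, $\Phi(x)=(\phi_1(x),\dots,\phi_p(x))^\top$, $\mathcal{D}\Phi(x)\in\mathbb{R}^{p\times n}$ its Jacobian. Let $\mathcal{Z}=\mathbb{R}^p_+$, $\Omega=\mathcal{X}\times\mathcal{Z}$, $w=(x,\lambda)$, $\Gamma(w)=(\mathcal{D}\Phi(x)^\top\lambda,\,-\Phi(x))$. For a symmetric matrix $A$, $\|v\|_A^2:=v^\top A v$; the norm of a matrix is the spectral norm; $\mathsf{R}(x):=\|\mathcal{D}\Phi(x)\|^2$. The scaled Lagrangian is $\mathcal{L}(x,\lambda,\rho,\eta)=\rho f(x)+\frac1\eta\lambda^\top\Phi(x)$. Fix $\rho>0$, $\mu>1$, a starting point $w^0=(x^0,\lambda^0)\in\Omega$ and positive numbers $\eta_0,\eta_1,\dots$. Given $w^k=(x^k,\lambda^k)\in\Omega$, iteration $k$ is: $r_k=\frac{1}{\eta_k}\sqrt{\mathsf{R}(x^k)}$; $\bar x^k=\arg\min_{x\in\mathcal{X}}\{\mathcal{L}(x,\lambda^k,\rho,\eta_k)+\frac{r_k}{2}\|x-x^k\|^2\}$; $s_k=\frac{\mu\,\mathsf{R}(\bar x^k)}{\eta_k\sqrt{\mathsf{R}(x^k)}}$; $\bar\lambda^k=\arg\max_{\lambda\in\mathcal{Z}}\{\mathcal{L}(\bar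 x^k,\lambda,\rho,\eta_k)-\frac{s_k}{2}\|\lambda-\lambda^k\|^2\}$ (equivalently $\bar\lambda^k=\max\{\lambda^k+\frac{1}{\eta_k s_k}\Phi(\bar x^k),0\}$ componentwise); $\bar w^k=(\bar x^k,\bar\lambda^k)$; and $w^{k+1}=w^k-M_k(w^k-\bar w^k)$ where $M_k=\begin{pmatrix}I_n & -\frac{1}{\eta_k r_k}\mathcal{D}\Phi(\bar x^k)^\top\\ 0 & I_p\end{pmatrix}$. It is assumed throughout that $\mathsf{R}(x^k)>0$ and $\mathsf{R}(\bar x^k)>0$ for all $k$. Define $Q_k=\begin{pmatrix} r_kI_n & -\frac{1}{\eta_k}\mathcal{D}\Phi(\bar x^k)^\top\\ 0 & s_kI_p\end{pmatrix}$, $H_k=\begin{pmatrix} r_kI_n&0\\0&s_kI_p\end{pmatrix}$, $G_k=\begin{pmatrix} r_kI_n&0\\0&s_kI_p-\frac{1}{\eta_k^2r_k}\mathcal{D}\Phi(\bar x^k)\mathcal{D}\Phi(\bar x^k)^\top\end{pmatrix}$. *)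

(* Vectors of R^n are represented as row vectors 'rV[R]_n (the convention
   of MathComp-Analysis' [jacobian]); a pair w = (x, lambda) is [row_mx x lambda]. *)
From HB Require Import structures.
From mathcomp Require Import all_boot all_order all_algebra.
From mathcomp Require Import all_classical all_reals all_analysis.
Set Implicit Arguments. Unset Strict Implicit. Unset Printing Implicit Defensive.
Import Order.TTheory GRing.Theory Num.Theory.
Import numFieldNormedType.Exports.
Local Open Scope classical_set_scope.
Local Open Scope ring_scope.

Section SpiceDefs.
Variable R : realType.

Definition dotv k (u v : 'rV[R]_k) : R := \sum_(i < k) u 0 i * v 0 i.
Definition enorm k (v : 'rV[R]_k) : R := Num.sqrt (dotv v v).

Definition qnorm2 k (A : 'M[R]_k) (v : 'rV[R]_k) : R := (v *m A *m v^T) 0 0.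

Definition specnorm p n (A : 'M[R]_(p, n)) : R :=
  sup [set enorm (u *m A^T) | u in [set u : 'rV[R]_n | enorm u <= 1]].

Definition convex_fun n (g : 'rV[R]_n -> R) : Prop :=
  forall x y (a : R), 0 <= a <= 1 ->
    g (a *: x + (1 - a) *: y) <= a * g x + (1 - a) * g y.

(* Jacobian D Phi(x) in R^{p x n}  (row i = gradient of phi_i);
   MathComp's [jacobian] uses the transposed (row-vector) convention. *)
Definition Jac n p (Phi : 'rV[R]_n -> 'rV[R]_p) (x : 'rV[R]_n) : 'M[R]_(p, n) :=
  (jacobian Phi x)^T.

Definition RR n p (Phi : 'rV[R]_n -> 'rV[R]_p) (x : 'rV[R]_n) : R :=
  specnorm (Jac Phi x) ^+ 2.

Definition nonneg p (l : 'rV[R]_p) : Prop := forall i, 0 <= l 0 i.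

Definition inOmega n p (X : set 'rV[R]_n) (w : 'rV[R]_(n + p)) : Prop :=
  X (lsubmx w) /\ nonneg (rsubmx w).

Definition Lag n p (f : 'rV[R]_n -> R) (Phi : 'rV[R]_n -> 'rV[R]_p)
  (x : 'rV[R]_n) (l : 'rV[R]_p) (rho eta : R) : R :=
  rho * f x + eta^-1 * dotv l (Phi x).

Definition Gamma n p (Phi : 'rV[R]_n -> 'rV[R]_p) (w : 'rV[R]_(n + p)) : 'rV[R]_(n + p) :=
  row_mx (rsubmx w *m Jac Phi (lsubmx w)) (- Phi (lsubmx w)).

(* M_k = [[I_n, -(1/(eta r)) DPhi(xbar)^T], [0, I_p]]  (acting on column vectors) *)
Definition Mmat n p (Phi : 'rV[R]_n -> 'rV[R]_p) (eta r : R) (xb : 'rV[R]_n)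
  : 'M[R]_(n + p) :=
  block_mx 1%:M (- ((eta * r)^-1 *: (Jac Phi xb)^T)) 0 1%:M.

Definition H0mat n p (Phi : 'rV[R]_n -> 'rV[R]_p) (mu : R) (x0 xb0 : 'rV[R]_n)
  : 'M[R]_(n + p) :=
  block_mx ((Num.sqrt (RR Phi x0))%:M) 0 0
           ((mu * RR Phi xb0 / Num.sqrt (RR Phi x0))%:M).

Definition spice_step n p (X : set 'rV[R]_n) (f : 'rV[R]_n -> R)
  (Phi : 'rV[R]_n -> 'rV[R]_p) (rho mu eta : R)
  (xk : 'rV[R]_n) (lk : 'rV[R]_p) (xbk : 'rV[R]_n) (lbk : 'rV[R]_p)
  (xk1 : 'rV[R]_n) (lk1 : 'rV[R]_p) : Prop :=
  let rk := eta^-1 * Num.sqrt (RR Phi xk) in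
  let sk := mu * RR Phi xbk / (eta * Num.sqrt (RR Phi xk)) in
  [/\ X xbk,
      (forall x, X x ->
         Lag f Phi xbk lk rho eta + rk / 2 * enorm (xbk - xk) ^+ 2
         <= Lag f Phi x lk rho eta + rk / 2 * enorm (x - xk) ^+ 2),
      nonneg lbk,
      (forall l, nonneg l ->
         Lag f Phi xbk l rho eta - sk / 2 * enorm (l - lk) ^+ 2
         <= Lag f Phi xbk lbk rho eta - sk / 2 * enorm (lbk - lk) ^+ 2) &
      (* w^{k+1} = w^k - M_k (w^k - wbar^k), written for row vectors *)
      row_mx xk1 lk1 =
        row_mx xk lk - (row_mx xk lk - row_mx xbk lbk) *m (Mmat Phi eta rk xbk)^T].

End SpiceDefs.

(* Each iteration k satisfies, for every w' = (x', lambda') in Omega, the descent inequality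
     rho (f xbar^k - f x') + (wbar^k - w')^T Gamma(w') / eta_k
       <= |w^k - w'|^2_{H_k} / 2 - |w^{k+1} - w'|^2_{H_k} / 2,
   the sum of the optimality conditions of the two proximal subproblems, the gradient
   inequalities of the convex phi_i at xbar^k and at x', and |DPhi(xbar)^T v|^2 <= R(xbar) |v|^2,
   which (as mu >= 1) lets the term s_k |lambda^k - lambdabar^k|^2 pay for the extrapolated
   x-update.  The step-size rule makes H_k nonincreasing in k, so the right-hand sides
   telescope to |w^0 - w'|^2_{H_0} / 2; Jensen's inequality for f and the linearity of the
   Gamma term in wbar^k turn the sum into the bound on the averages. *)

From HB Require Import structures.
From mathcomp Require Import all_boot all_order all_algebra.
From mathcomp Require Import all_classical all_reals all_analysis.
From mathcomp Require Import ring lra.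
Import Order.TTheory GRing.Theory Num.Theory.
Import numFieldNormedType.Exports.
Local Open Scope classical_set_scope.
Local Open Scope ring_scope.
Set Implicit Arguments. Unset Strict Implicit. Unset Printing Implicit Defensive.

Section InnerProduct.
Variable R : realType.
Implicit Types (k : nat) (a : R).

Lemma dotvC k (u v : 'rV[R]_k) : dotv u v = dotv v u.
Proof. by apply: eq_bigr => i _; rewrite mulrC. Qed.

Lemma dotvDl k (u v w : 'rV[R]_k) : dotv (u + v) w = dotv u w + dotv v w.
Proof. by rewrite /dotv -big_split; apply: eq_bigr => i _; rewrite mxE mulrDl. Qed.

Lemma dotvZl k a (u w : 'rV[R]_k) : dotv (a *: u) w = a * dotv u w.
Proof. by rewrite /dotv mulr_sumr; apply: eq_bigr => i _; rewrite mxE mulrA. Qed.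

Lemma dotvNl k (u w : 'rV[R]_k) : dotv (- u) w = - dotv u w.
Proof. by rewrite -scaleN1r dotvZl mulN1r. Qed.

Lemma dotvBl k (u v w : 'rV[R]_k) : dotv (u - v) w = dotv u w - dotv v w.
Proof. by rewrite dotvDl dotvNl. Qed.

Lemma dotvDr k (u v w : 'rV[R]_k) : dotv w (u + v) = dotv w u + dotv w v.
Proof. by rewrite dotvC dotvDl !(dotvC w). Qed.

Lemma dotvZr k a (u w : 'rV[R]_k) : dotv w (a *: u) = a * dotv w u.
Proof. by rewrite dotvC dotvZl dotvC. Qed.

Lemma dotvNr k (u w : 'rV[R]_k) : dotv w (- u) = - dotv w u.
Proof. by rewrite dotvC dotvNl dotvC. Qed.

Lemma dotvBr k (u v w : 'rV[R]_k) : dotv w (u - v) = dotv w u - dotv w v.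
Proof. by rewrite dotvDr dotvNr. Qed.

Lemma dotv0l k (w : 'rV[R]_k) : dotv 0 w = 0.
Proof. by rewrite /dotv big1 // => i _; rewrite mxE mul0r. Qed.

Lemma dotvDD k (u v : 'rV[R]_k) :
  dotv (u + v) (u + v) = dotv u u + 2 * dotv u v + dotv v v.
Proof. by rewrite !(dotvDl, dotvDr) (dotvC v u); ring. Qed.

Lemma dotvDZ k a (u v : 'rV[R]_k) :
  dotv (u + a *: v) (u + a *: v) = dotv u u + 2 * a * dotv u v + a ^+ 2 * dotv v v.
Proof. by rewrite dotvDD !(dotvZl, dotvZr); ring. Qed.

Lemma dotv_distC k (u v : 'rV[R]_k) : dotv (u - v) (u - v) = dotv (v - u) (v - u).
Proof. by rewrite -opprB dotvNl dotvNr opprK. Qed.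

Lemma dotv_ge0 k (v : 'rV[R]_k) : 0 <= dotv v v.
Proof. by apply: sumr_ge0 => i _; rewrite -expr2 sqr_ge0. Qed.

Lemma coord_sqr_le_dotv k (u : 'rV[R]_k) j : u 0 j ^+ 2 <= dotv u u.
Proof.
rewrite /dotv (bigD1 j) //= -expr2 lerDl.
by apply: sumr_ge0 => i _; rewrite -expr2 sqr_ge0.
Qed.

Lemma dotv_row_mx k1 k2 (a c : 'rV[R]_k1) (b d : 'rV[R]_k2) :
  dotv (row_mx a b) (row_mx c d) = dotv a c + dotv b d.
Proof.
rewrite /dotv big_split_ord /=; congr (_ + _); apply: eq_bigr => i _.
  by rewrite !row_mxEl.
by rewrite !row_mxEr.
Qed.

Lemma dotv_mulmx k1 k2 (u : 'rV[R]_k1) (A : 'M[R]_(k1, k2)) (v : 'rV[R]_k2) :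
  dotv (u *m A) v = dotv u (v *m A^T).
Proof.
rewrite /dotv; under eq_bigr do rewrite mxE mulr_suml.
rewrite exchange_big /=; apply: eq_bigr => j _.
by rewrite mxE mulr_sumr; apply: eq_bigr => i _; rewrite mxE; ring.
Qed.

Lemma dotv_suml k I (r : seq I) (P : pred I) (F : I -> 'rV[R]_k) w :
  dotv (\sum_(i <- r | P i) F i) w = \sum_(i <- r | P i) dotv (F i) w.
Proof.
elim/big_rec2: _ => [|i y1 y2 _ <-]; first by rewrite dotv0l.
by rewrite dotvDl.
Qed.

Lemma mulmx_trmx00 k (u v : 'rV[R]_k) : (u *m v^T) 0 0 = dotv u v.
Proof. by rewrite mxE; apply: eq_bigr => i _; rewrite mxE. Qed.

Lemma enorm_ge0 k (v : 'rV[R]_k) : 0 <= enorm v.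
Proof. exact: sqrtr_ge0. Qed.

Lemma enorm_sqr k (v : 'rV[R]_k) : enorm v ^+ 2 = dotv v v.
Proof. by rewrite /enorm sqr_sqrtr // dotv_ge0. Qed.

Lemma enormZ k a (v : 'rV[R]_k) : enorm (a *: v) = `|a| * enorm v.
Proof.
by rewrite /enorm dotvZl dotvZr mulrA -expr2 sqrtrM ?sqr_ge0 // sqrtr_sqr.
Qed.

End InnerProduct.

Section VanishingPerturbation.
Variable R : realType.

Lemma ler_cvg_at_right (g : R -> R) (L c K : R) :
  g a @[a --> 0^'+] --> L ->
  (forall a, 0 < a -> a <= 1 -> c <= g a + a * K) -> c <= L.
Proof.
move=> gL cle.
have a0 : a @[a --> (0:R)^'+] --> (0:R) by apply: cvg_at_right_filter; exact: cvg_id.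
have gKL : g a + a * K @[a --> 0^'+] --> L.
  by have := cvgD gL (cvgM a0 (cvg_cst K)); rewrite mul0r addr0; apply.
have PF := at_right_proper_filter (0:R).
apply: (cvgr_to_ge gKL); near=> a; apply: cle.
  by near: a; exact: nbhs_right_gt.
by near: a; exact: nbhs_right_le.
Unshelve. all: by end_near.
Qed.

Lemma le_add_vanishing (x y K : R) :
  (forall a, 0 < a -> a <= 1 -> x <= y + a * K) -> x <= y.
Proof. exact: (@ler_cvg_at_right (fun=> y) y x K (cvg_cst y)). Qed.

End VanishingPerturbation.

Section SpectralNorm.
Variable R : realType.
Variables (p n : nat) (A : 'M[R]_(p, n)).

Let image_ball := [set enorm (u *m A^T) | u in [set u : 'rV[R]_n | enorm u <= 1]].

Lemma image_ball_has_sup : has_sup image_ball.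
Proof.
split; first by exists (enorm ((0 : 'rV[R]_n) *m A^T)); exists 0; rewrite //= /enorm dotv0l sqrtr0.
pose c i := \sum_(j < n) `|A i j|.
exists (Num.sqrt (\sum_(i < p) c i ^+ 2)) => _ [u /= u1 <-].
rewrite /enorm ler_sqrt; last by apply: sumr_ge0 => i _; exact: sqr_ge0.
apply: ler_sum => i _; rewrite -expr2.
have uu1 : dotv u u <= 1 by rewrite -enorm_sqr exprn_ile1 ?enorm_ge0.
have uj j : `|u 0 j| <= 1.
  rewrite -(@expr_le1 _ 2) // real_normK ?num_real //.
  exact: le_trans (coord_sqr_le_dotv u j) uu1.
have wi : `|(u *m A^T) 0 i| <= c i.
  rewrite mxE (le_trans (ler_norm_sum _ _ _)) //; apply: ler_sum => j _.
  by rewrite mxE normrM -[X in _ <= X]mul1r ler_wpM2r.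
rewrite -real_normK ?num_real // !expr2.
by apply: ler_pM => //; exact: le_trans wi.
Qed.

Lemma specnorm_ge0 : 0 <= specnorm A.
Proof.
apply: le_trans (enorm_ge0 ((0 : 'rV[R]_n) *m A^T)) _.
apply: sup_upper_bound; first exact: image_ball_has_sup.
by exists 0; rewrite //= /enorm dotv0l sqrtr0.
Qed.

Lemma enorm_mulmx_le (u : 'rV[R]_n) : enorm (u *m A^T) <= specnorm A * enorm u.
Proof.
apply: (@le_add_vanishing _ _ _ (specnorm A)) => e e0 e1.
set nu := enorm u; have nue : 0 < nu + e by rewrite ltr_wpDl ?enorm_ge0.
have nueV : 0 <= (nu + e)^-1 by rewrite invr_ge0 ltW.
have : enorm (((nu + e)^-1 *: u) *m A^T) <= specnorm A.
  apply: sup_upper_bound; first exact: image_ball_has_sup.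
  exists ((nu + e)^-1 *: u) => //=.
  by rewrite enormZ ger0_norm // ler_pdivrMl // mulr1 lerDl ltW.
rewrite -scalemxAl enormZ ger0_norm // ler_pdivrMl //.
by rewrite mulrDl mulrC.
Qed.

Lemma dotv_mulmx_le (v : 'rV[R]_p) :
  0 < specnorm A ^+ 2 -> dotv (v *m A) (v *m A) <= specnorm A ^+ 2 * dotv v v.
Proof.
move=> S0; set S2 := specnorm A ^+ 2; set y := v *m A; set z := y *m A^T.
have yz : dotv y y = dotv v z by rewrite /y dotv_mulmx.
have zy : dotv z z <= S2 * dotv y y.
  rewrite -!enorm_sqr /S2 -exprMn ler_pXn2r ?nnegrE ?enorm_ge0 //.
    exact: enorm_mulmx_le.
  by rewrite mulr_ge0 ?specnorm_ge0 ?enorm_ge0.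
(* expand 0 <= |S2 v - z|^2 and use |z|^2 <= S2 (v . z) *)
have h0 := dotv_ge0 (S2 *: v - z).
rewrite !(dotvBl, dotvBr, dotvZl, dotvZr) (dotvC z v) -yz in h0.
have vv := dotv_ge0 v; have yy := dotv_ge0 y.
have : S2 * dotv y y <= S2 * (S2 * dotv v v) by nra.
by rewrite ler_pM2l.
Qed.

End SpectralNorm.

Section Convexity.
Variable R : realType.
Implicit Types (k : nat).

Lemma conv_shiftE k a (y z : 'rV[R]_k) : a *: (y - z) + z = a *: y + (1 - a) *: z.
Proof. by apply/rowP => j; rewrite !mxE; ring. Qed.

Lemma convex_set_mem k (X : set 'rV[R]_k) x y (a : R) :
  convex_set X -> X x -> X y -> 0 <= a -> a <= 1 -> X (a *: x + (1 - a) *: y).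
Proof.
move=> cX Xx Xy a0 a1.
exact/set_mem/(cX x y (Itv01 a0 a1) (mem_set Xx) (mem_set Xy)).
Qed.

Lemma sum_nat_gt0 (w : nat -> R) m :
  (forall k, (k <= m)%N -> 0 < w k) -> 0 < \sum_(0 <= k < m.+1) w k.
Proof.
move=> w0; rewrite big_nat_recr //= ltr_wpDl ?w0 //.
by rewrite big_nat; apply: sumr_ge0 => k /andP[_ km]; apply/ltW/w0/ltnW.
Qed.

Lemma wavg_recr k (W w : R) (s y : 'rV[R]_k) : 0 < W -> 0 < w ->
  (W + w)^-1 *: (s + w *: y) = (w / (W + w)) *: y + (1 - w / (W + w)) *: (W^-1 *: s).
Proof.
move=> W0 w0; have Ww : 0 < W + w by rewrite addr_gt0.
by apply/rowP => j; rewrite !mxE; field; rewrite !lt0r_neq0.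
Qed.

Lemma convex_set_wavg k (X : set 'rV[R]_k) (w : nat -> R) (y : nat -> 'rV[R]_k) m :
  convex_set X -> (forall i, (i <= m)%N -> 0 < w i) -> (forall i, (i <= m)%N -> X (y i)) ->
  X ((\sum_(0 <= i < m.+1) w i)^-1 *: \sum_(0 <= i < m.+1) w i *: y i).
Proof.
move=> cX; elim: m => [|m IH] w0 Xy.
  have w00 : w 0%N != 0 by rewrite lt0r_neq0 // w0.
  by rewrite !big_nat1 scalerA mulVf // scale1r; exact: Xy.
have W0 := sum_nat_gt0 (fun i im => w0 i (leqW im)).
have wm0 : 0 < w m.+1 by exact: w0.
have Ww : 0 < \sum_(0 <= i < m.+1) w i + w m.+1 by rewrite addr_gt0.
rewrite !(big_nat_recr m.+1) //= wavg_recr //.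
apply: convex_set_mem => //; first exact: Xy.
- by apply: IH => i im; [exact: w0 (leqW im) | exact: Xy (leqW im)].
- by rewrite divr_ge0 // ltW.
- by rewrite ler_pdivrMr // mul1r lerDr ltW.
Qed.

Lemma convex_fun_wavg k (f : 'rV[R]_k -> R) (w : nat -> R) (y : nat -> 'rV[R]_k) m :
  convex_fun f -> (forall i, (i <= m)%N -> 0 < w i) ->
  f ((\sum_(0 <= i < m.+1) w i)^-1 *: \sum_(0 <= i < m.+1) w i *: y i)
  <= (\sum_(0 <= i < m.+1) w i)^-1 * \sum_(0 <= i < m.+1) w i * f (y i).
Proof.
move=> cf; elim: m => [|m IH] w0.
  have w00 : w 0%N != 0 by rewrite lt0r_neq0 // w0.
  by rewrite !big_nat1 scalerA mulVf // scale1r mulrA mulVf // mul1r.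
have W0 := sum_nat_gt0 (fun i im => w0 i (leqW im)).
have wm0 : 0 < w m.+1 by exact: w0.
rewrite !(big_nat_recr m.+1) //= wavg_recr //.
set W := \sum_(0 <= i < m.+1) w i; set a := w m.+1 / (W + w m.+1).
have Ww : 0 < W + w m.+1 by rewrite addr_gt0.
have a0 : 0 <= a by rewrite divr_ge0 // ltW.
have a1 : a <= 1 by rewrite ler_pdivrMr // mul1r lerDr ltW.
apply: le_trans; first by apply: cf; rewrite a0 a1.
set F := \sum_(0 <= i < m.+1) w i * f (y i).
have -> : (W + w m.+1)^-1 * (F + w m.+1 * f (y m.+1)) = a * f (y m.+1) + (1 - a) * (W^-1 * F).
  by rewrite /a; field; rewrite !lt0r_neq0.
by rewrite lerD2l ler_wpM2l ?subr_ge0 // IH // => i im; exact: w0 (leqW im).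
Qed.

Lemma convex_fun_avg k (f : 'rV[R]_k -> R) (y : nat -> 'rV[R]_k) m :
  convex_fun f ->
  f ((m.+1%:R)^-1 *: \sum_(0 <= i < m.+1) y i) <= (m.+1%:R)^-1 * \sum_(0 <= i < m.+1) f (y i).
Proof.
move=> cf; have := @convex_fun_wavg _ f (fun=> 1) y m cf (fun _ _ => ltr01).
rewrite sumr_const_nat subn0; under eq_bigr do rewrite scale1r.
by under [X in _ <= _ * X]eq_bigr do rewrite mul1r.
Qed.

Lemma dotv_wavgBl k (w : nat -> R) (y : nat -> 'rV[R]_k) z g m :
  0 < \sum_(0 <= i < m.+1) w i ->
  (\sum_(0 <= i < m.+1) w i)
    * dotv ((\sum_(0 <= i < m.+1) w i)^-1 *: \sum_(0 <= i < m.+1) w i *: y i - z) g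
  = \sum_(0 <= i < m.+1) w i * dotv (y i - z) g.
Proof.
move=> W0; rewrite dotvBl dotvZl dotv_suml mulrBr mulrA mulfV ?lt0r_neq0 // mul1r.
under eq_bigr do rewrite dotvZl; under [RHS]eq_bigr do rewrite dotvBl mulrBr.
by rewrite sumrB mulr_suml.
Qed.

End Convexity.

Section FirstOrder.
Variable R : realType.
Variables (n p : nat) (Phi : 'rV[R]_n -> 'rV[R]_p).

Lemma dirder_at_right z d : differentiable Phi z ->
  h^-1 *: (Phi (h *: d + z) - Phi z) @[h --> 0^'+] --> d *m jacobian Phi z.
Proof.
move=> dz; apply: cvg_dnbhs_at_right; rewrite -deriveEjacobian //.
exact: (diff_derivable (v := d) dz).
Qed.

Lemma dotv_dirder_at_right z d (l : 'rV[R]_p) : differentiable Phi z ->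
  dotv l (h^-1 *: (Phi (h *: d + z) - Phi z)) @[h --> 0^'+] --> dotv l (d *m jacobian Phi z).
Proof.
move=> dz; apply: cvg_big; first exact: (@add_continuous R^o).
move=> i _; apply: cvgM; first exact: cvg_cst.
apply: (continuous_cvg _ (@coord_continuous R 1 p 0 i _)); exact: dirder_at_right.
Qed.

Lemma convex_coord_first_order i z y :
  convex_fun (fun z => Phi z 0 i) -> differentiable Phi z ->
  ((y - z) *m jacobian Phi z) 0 i <= Phi y 0 i - Phi z 0 i.
Proof.
move=> cv dz.
have q_cvg := continuous_cvg _ (@coord_continuous R 1 p 0 i _) (dirder_at_right (d := y - z) dz).
have PF := at_right_proper_filter (0:R).
apply: (cvgr_to_le (q_cvg _)); near=> a.
have a0 : 0 < a by near: a; exact: nbhs_right_gt.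
have a1 : a <= 1 by near: a; exact: nbhs_right_le.
rewrite /= !mxE conv_shiftE ler_pdivrMl //.
have := cv y z a; rewrite ltW //= a1 => /(_ isT); lra.
Unshelve. all: by end_near.
Qed.

Lemma convex_nonneg_first_order (l : 'rV[R]_p) z y :
  (forall i, convex_fun (fun z => Phi z 0 i)) -> differentiable Phi z -> nonneg l ->
  dotv l ((y - z) *m jacobian Phi z) <= dotv l (Phi y) - dotv l (Phi z).
Proof.
move=> cv dz l0; rewrite /dotv -sumrB; apply: ler_sum => i _.
by rewrite -mulrBr ler_wpM2l //; exact: convex_coord_first_order.
Qed.

End FirstOrder.

Lemma sum_telescope_le (R : realFieldType) (d a b : nat -> R) m :
  (forall k, (k <= m)%N -> d k <= a k - b k) ->
  (forall k, (k < m)%N -> a k.+1 <= b k) -> 0 <= b m ->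
  \sum_(0 <= k < m.+1) d k <= a 0%N.
Proof.
move=> dab ab bm0.
suff : \sum_(0 <= k < m.+1) d k <= a 0%N - b m by lra.
elim: m {bm0} dab ab => [|m IH] dab ab; first by rewrite big_nat1 dab.
rewrite big_nat_recr //=.
have := IH (fun k km => dab k (leqW km)) (fun k km => ab k (ltnW km)).
have := dab m.+1 (leqnn _); have := ab m (ltnSn _); lra.
Qed.

Lemma inOmega_wavg (R : realType) n p (X : set 'rV[R]_n) (w : nat -> R)
    (y : nat -> 'rV[R]_n) (l : nat -> 'rV[R]_p) m :
  convex_set X -> (forall k, (k <= m)%N -> 0 < w k) ->
  (forall k, (k <= m)%N -> X (y k)) -> (forall k, (k <= m)%N -> nonneg (l k)) ->
  inOmega X ((\sum_(0 <= k < m.+1) w k)^-1 *: \sum_(0 <= k < m.+1) w k *: row_mx (y k) (l k)).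
Proof.
move=> cX w0 Xy l0; split.
  rewrite linearZ linear_sum /= (eq_bigr (fun k => w k *: y k)).
    exact: convex_set_wavg.
  by move=> k _; rewrite linearZ /= row_mxKl.
move=> i; rewrite linearZ linear_sum /= mxE summxE.
apply: mulr_ge0; first by rewrite invr_ge0; exact/ltW/sum_nat_gt0.
rewrite big_nat; apply: sumr_ge0 => k /andP[_ km].
by rewrite linearZ /= row_mxKr mxE; apply: mulr_ge0; [exact/ltW/w0 | exact: l0].
Qed.

Section ProxOptimality.
Variable R : realType.
Variables (n p : nat) (f : 'rV[R]_n -> R) (Phi : 'rV[R]_n -> 'rV[R]_p) (rho eta : R).

Lemma prox_x_optimality (X : set 'rV[R]_n) (lk : 'rV[R]_p) (rk : R) xk xbk x :
  convex_set X -> convex_fun f -> 0 <= rho -> 0 < eta ->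
  X xbk -> X x -> differentiable Phi xbk ->
  (forall y, X y -> Lag f Phi xbk lk rho eta + rk / 2 * enorm (xbk - xk) ^+ 2
                   <= Lag f Phi y lk rho eta + rk / 2 * enorm (y - xk) ^+ 2) ->
  0 <= rho * (f x - f xbk) + eta^-1 * dotv lk ((x - xbk) *m jacobian Phi xbk)
       + rk * dotv (xbk - xk) (x - xbk).
Proof.
move=> cX cf rho0 eta0 Xb Xx dz xmin; set d := x - xbk.
(* test the minimality of xbk against xbk + a d, a in (0, 1], and let a vanish *)
apply: (@ler_cvg_at_right _ (fun a => rho * (f x - f xbk)
     + eta^-1 * dotv lk (a^-1 *: (Phi (a *: d + xbk) - Phi xbk))
     + rk * dotv (xbk - xk) d) _ 0 (rk / 2 * dotv d d)).
  apply: cvgD; last exact: cvg_cst.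
  apply: cvgD; first exact: cvg_cst.
  by apply: cvgM; [exact: cvg_cst | exact: dotv_dirder_at_right].
move=> a a0 a1 /=; set ya := a *: d + xbk.
have Xya : X ya by rewrite /ya /d conv_shiftE; apply: convex_set_mem => //; exact: ltW.
have := xmin ya Xya; rewrite /Lag !enorm_sqr.
have -> : ya - xk = (xbk - xk) + a *: d by rewrite /ya; apply/rowP=> j; rewrite !mxE; ring.
rewrite dotvDZ => hmin; rewrite dotvZr dotvBr.
have hf : rho * f ya <= rho * (a * f x + (1 - a) * f xbk).
  by rewrite ler_wpM2l // /ya /d conv_shiftE; apply: cf; rewrite (ltW a0) a1.
set Ly := dotv lk (Phi ya) in hmin *; set Lb := dotv lk (Phi xbk) in hmin *.
set ed := dotv (xbk - xk) d in hmin *; set dd := dotv d d in hmin *.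
set T := (X in 0 <= X).
have aT : a * T = rho * a * (f x - f xbk) + eta^-1 * (Ly - Lb) + rk * a * ed + rk / 2 * a ^+ 2 * dd.
  by rewrite /T; field; rewrite !lt0r_neq0.
by rewrite -(pmulr_rge0 _ a0) aT; nra.
Qed.

Lemma prox_lambda_optimality (sk : R) lk xbk lbk l :
  nonneg lbk -> nonneg l ->
  (forall l, nonneg l ->
     Lag f Phi xbk l rho eta - sk / 2 * enorm (l - lk) ^+ 2
     <= Lag f Phi xbk lbk rho eta - sk / 2 * enorm (lbk - lk) ^+ 2) ->
  eta^-1 * dotv (l - lbk) (Phi xbk) <= sk * dotv (lbk - lk) (l - lbk).
Proof.
move=> lb0 l0 lmax; set b := l - lbk.
apply: (@le_add_vanishing _ _ _ (sk / 2 * dotv b b)) => a a0 a1.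
have la0 : nonneg (lbk + a *: b).
  move=> i; have := lb0 i; have := l0 i; rewrite /b !mxE => li lbi.
  have -> : lbk 0 i + a * (l 0 i - lbk 0 i) = a * l 0 i + (1 - a) * lbk 0 i by ring.
  by apply: addr_ge0; apply: mulr_ge0 => //; lra.
have := lmax _ la0; rewrite /Lag !enorm_sqr.
have -> : lbk + a *: b - lk = (lbk - lk) + a *: b by apply/rowP=> j; rewrite !mxE; ring.
rewrite dotvDZ dotvDl dotvZl => hmax.
set P := dotv b (Phi xbk) in hmax *; set vb := dotv (lbk - lk) b in hmax *.
set bb := dotv b b in hmax *.
have : a * (eta^-1 * P) <= a * (sk * vb + a * (sk / 2 * bb)) by nra.
by rewrite ler_pM2l.
Qed.

End ProxOptimality.

Lemma ler_pdiv_cross (R : numFieldType) (a b c d : R) :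
  0 < b -> 0 < d -> (a / b <= c / d) = (a * d <= c * b).
Proof. by move=> b0 d0; rewrite ler_pdivrMr // mulrAC ler_pdivlMr. Qed.

Definition Hdist2 (R : realType) n p (r s : R) (dx : 'rV[R]_n) (dl : 'rV[R]_p) : R :=
  r * dotv dx dx + s * dotv dl dl.

Lemma Hdist2_ge0 (R : realType) n p (r s : R) (dx : 'rV[R]_n) (dl : 'rV[R]_p) :
  0 <= r -> 0 <= s -> 0 <= Hdist2 r s dx dl.
Proof. by move=> r0 s0; rewrite addr_ge0 ?mulr_ge0 ?dotv_ge0. Qed.

Lemma Hdist2_le (R : realType) n p (r r' s s' : R) (dx : 'rV[R]_n) (dl : 'rV[R]_p) :
  r' <= r -> s' <= s -> Hdist2 r' s' dx dl <= Hdist2 r s dx dl.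
Proof. by move=> rr ss; rewrite lerD ?ler_wpM2r ?dotv_ge0. Qed.

Lemma Hdist2_distC (R : realType) n p (r s : R) (x y : 'rV[R]_n) (l m : 'rV[R]_p) :
  Hdist2 r s (x - y) (l - m) = Hdist2 r s (y - x) (m - l).
Proof. by rewrite /Hdist2 dotv_distC (dotv_distC l). Qed.

Section SpiceStep.
Variable R : realType.
Variables (n p : nat) (Phi : 'rV[R]_n -> 'rV[R]_p) (mu : R).

Definition xweight (eta : R) (x : 'rV[R]_n) : R := eta^-1 * Num.sqrt (RR Phi x).
Definition lweight (eta : R) (x xb : 'rV[R]_n) : R :=
  mu * RR Phi xb / (eta * Num.sqrt (RR Phi x)).

Lemma xweight_ge0 eta x : 0 < eta -> 0 <= xweight eta x.
Proof. by move=> e0; rewrite mulr_ge0 ?sqrtr_ge0 // invr_ge0 ltW. Qed.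

Lemma lweight_ge0 eta x xb : 0 <= mu -> 0 < eta -> 0 <= lweight eta x xb.
Proof.
move=> mu0 e0; apply: divr_ge0; apply: mulr_ge0 => //;
  by [exact: sqr_ge0 | exact: ltW | exact: sqrtr_ge0].
Qed.

Lemma qnorm2_H0mat x0 xb0 (dx : 'rV[R]_n) (dl : 'rV[R]_p) :
  qnorm2 (H0mat Phi mu x0 xb0) (row_mx dx dl)
  = Hdist2 (Num.sqrt (RR Phi x0)) (mu * RR Phi xb0 / Num.sqrt (RR Phi x0)) dx dl.
Proof.
rewrite /qnorm2 /H0mat /Hdist2 mul_row_block !mulmx0 addr0 add0r !mul_mx_scalar.
by rewrite tr_row_mx mul_row_col -!scalemxAl -!mulmx_trmx00 !mxE.
Qed.

Lemma Hdist2_weights eta x xb (dx : 'rV[R]_n) (dl : 'rV[R]_p) :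
  Hdist2 (xweight eta x) (lweight eta x xb) dx dl
  = eta^-1 * Hdist2 (Num.sqrt (RR Phi x)) (mu * RR Phi xb / Num.sqrt (RR Phi x)) dx dl.
Proof. by rewrite /Hdist2 /xweight /lweight invfM; ring. Qed.

Lemma xweight_le eta0 eta1 x0 x1 :
  0 < eta0 -> 0 < RR Phi x0 -> 0 < RR Phi x1 ->
  eta0 * Num.sqrt (RR Phi x1 / RR Phi x0) <= eta1 -> xweight eta1 x1 <= xweight eta0 x0.
Proof.
rewrite /xweight; move: (RR Phi x0) (RR Phi x1) => A0 A1 e0 A0_gt0 A1_gt0.
have s0 : 0 < Num.sqrt A0 by rewrite sqrtr_gt0.
move=> le_eta; rewrite sqrtrM in le_eta; last exact: ltW.
rewrite sqrtrV in le_eta; last exact: ltW.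
have e1 : 0 < eta1.
  by apply: lt_le_trans le_eta; rewrite !(mulr_gt0, invr_gt0) ?sqrtr_gt0.
rewrite ![_^-1 * _]mulrC ler_pdiv_cross // [X in _ <= X]mulrC.
by rewrite (mulrC (Num.sqrt A1)) -ler_pdivrMr // -mulrA.
Qed.

Lemma lweight_le eta0 eta1 x0 x1 xb0 xb1 :
  0 < mu -> 0 < eta0 -> 0 < RR Phi x0 -> 0 < RR Phi x1 -> 0 < RR Phi xb0 -> 0 < RR Phi xb1 ->
  eta0 * (RR Phi xb1 * Num.sqrt (RR Phi x0)) / (RR Phi xb0 * Num.sqrt (RR Phi x1)) <= eta1 ->
  lweight eta1 x1 xb1 <= lweight eta0 x0 xb0.
Proof.
rewrite /lweight; move: (RR Phi x0) (RR Phi x1) (RR Phi xb0) (RR Phi xb1).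
move=> A0 A1 B0 B1 mu0 e0 A0_gt0 A1_gt0 B0_gt0 B1_gt0.
have s0 : 0 < Num.sqrt A0 by rewrite sqrtr_gt0.
have s1 : 0 < Num.sqrt A1 by rewrite sqrtr_gt0.
move=> le_eta; have e1 : 0 < eta1 by apply: lt_le_trans le_eta; rewrite divr_gt0 ?mulr_gt0.
rewrite ler_pdivrMr ?mulr_gt0 // in le_eta.
rewrite ler_pdiv_cross ?mulr_gt0 //.
by have := ler_wpM2l (ltW mu0) le_eta; congr (_ <= _); ring.
Qed.

Lemma spice_update eta r xk lk xbk lbk xk1 lk1 :
  row_mx xk1 lk1 = row_mx xk lk - (row_mx xk lk - row_mx xbk lbk) *m (Mmat Phi eta r xbk)^T ->
  xk1 = xbk + (eta * r)^-1 *: ((lk - lbk) *m Jac Phi xbk) /\ lk1 = lbk.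
Proof.
rewrite /Mmat tr_block_mx !trmx1 trmx0 !(opp_row_mx, add_row_mx) mul_row_block.
rewrite !mulmx1 !mulmx0 add0r !(opp_row_mx, add_row_mx) => /eq_row_mx [-> ->].
rewrite linearN /= linearZ /= trmxK mulmxN -scalemxAr.
by split; apply/rowP => j; rewrite !mxE; ring.
Qed.

(* the extrapolation of the x-step costs at most s_k |v|^2, since mu >= 1 *)
Lemma xweight_correction_le eta xk xbk (a w : 'rV[R]_n) (v : 'rV[R]_p) :
  1 <= mu -> 0 < eta -> 0 < RR Phi xk -> 0 < RR Phi xbk ->
  dotv w w <= RR Phi xbk * dotv v v ->
  xweight eta xk * dotv (a + (eta * xweight eta xk)^-1 *: w) (a + (eta * xweight eta xk)^-1 *: w)
  <= xweight eta xk * dotv a a + 2 * eta^-1 * dotv a w + lweight eta xk xbk * dotv v v.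
Proof.
rewrite /lweight /xweight; move: (RR Phi xk) (RR Phi xbk) => Ak Bk mu1 e0 Ak_gt0 Bk_gt0 ww.
have sk : 0 < Num.sqrt Ak by rewrite sqrtr_gt0.
have eA : 0 < eta * Num.sqrt Ak by rewrite mulr_gt0.
set r := eta^-1 * Num.sqrt Ak; set c := (eta * r)^-1.
have rc : r * c = eta^-1 by rewrite /c invfM mulrCA mulfV ?mulr1 // lt0r_neq0 // mulr_gt0 ?invr_gt0.
have rc2 : r * c ^+ 2 = (eta * Num.sqrt Ak)^-1 by rewrite /c /r; field; rewrite !lt0r_neq0.
have extra : r * (c ^+ 2 * dotv w w) <= mu * Bk / (eta * Num.sqrt Ak) * dotv v v.
  rewrite mulrA rc2; apply: le_trans (ler_wpM2l _ ww) _; first by rewrite invr_ge0 ltW.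
  have -> : mu * Bk / (eta * Num.sqrt Ak) * dotv v v = mu * ((eta * Num.sqrt Ak)^-1 * (Bk * dotv v v)).
    by ring.
  by rewrite ler_peMl // mulr_ge0 ?invr_ge0 ?mulr_ge0 ?dotv_ge0 // ltW.
rewrite dotvDZ !mulrDr -/c.
have -> : r * (2 * c * dotv a w) = 2 * eta^-1 * dotv a w by rewrite -rc; ring.
by rewrite lerD2l.
Qed.

End SpiceStep.

(* the arithmetic of spice_step_descent, with its inner products abstracted as reals *)
Lemma descent_combination {R : realFieldType}
  {E rho fb fs r s aa au uu bb bv vv q g1 g2 g3 lPs sPs lPb sPb : R} :
  0 <= rho * (fs - fb) + E * - g1 + r * au ->
  E * - (lPb - sPb) <= s * bv ->
  E * - g2 <= E * (lPs - lPb) ->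
  E * g3 <= E * (sPb - sPs) ->
  r * q <= r * aa + 2 * E * (g1 - g2) + s * vv ->
  0 <= r * uu ->
  rho * (fb - fs) + E * (g3 - (lPs - sPs))
  <= 2^-1 * (r * (aa + 2 * au + uu) + s * (bb + 2 * bv + vv)) - 2^-1 * (r * q + s * bb).
Proof. move=> *; lra. Qed.

Section SpiceDescent.
Variable R : realType.
Variables (n p : nat) (X : set 'rV[R]_n) (f : 'rV[R]_n -> R)
  (Phi : 'rV[R]_n -> 'rV[R]_p) (rho mu : R).
Hypotheses (convX : convex_set X) (convf : convex_fun f)
  (convPhi : forall i, convex_fun (fun z => Phi z 0 i))
  (diffPhi : forall z, differentiable Phi z) (rho_gt0 : 0 < rho) (mu_ge1 : 1 <= mu).

Lemma spice_step_descent eta xk lk xbk lbk xk1 lk1 xs ls :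
  0 < eta -> 0 < RR Phi xk -> 0 < RR Phi xbk ->
  spice_step X f Phi rho mu eta xk lk xbk lbk xk1 lk1 -> X xs -> nonneg ls ->
  rho * (f xbk - f xs)
    + eta^-1 * dotv (row_mx xbk lbk - row_mx xs ls) (Gamma Phi (row_mx xs ls))
  <= 2^-1 * Hdist2 (xweight Phi eta xk) (lweight Phi mu eta xk xbk) (xk - xs) (lk - ls)
   - 2^-1 * Hdist2 (xweight Phi eta xk) (lweight Phi mu eta xk xbk) (xk1 - xs) (lk1 - ls).
Proof.
move=> eta0 Ak Bk [Xb xmin lb0 lmax upd] Xs ls0.
have HX := @prox_x_optimality R n p f Phi rho eta X lk (xweight Phi eta xk) xk xbk xs
  convX convf (ltW rho_gt0) eta0 Xb Xs (diffPhi xbk) xmin.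
have HL := @prox_lambda_optimality R n p f Phi rho eta (lweight Phi mu eta xk xbk)
  lk xbk lbk ls lb0 ls0 lmax.
have C1 := convex_nonneg_first_order xs convPhi (diffPhi xbk) lb0.
have C2 := convex_nonneg_first_order xbk convPhi (diffPhi xs) ls0.
have CB := xweight_correction_le (xbk - xs) mu_ge1 eta0 Ak Bk (dotv_mulmx_le (lk - lbk) Bk).
have [-> ->] := spice_update upd; rewrite -/(xweight Phi eta xk).
rewrite /Gamma row_mxKl row_mxKr opp_row_mx add_row_mx dotv_row_mx /Hdist2.
rewrite -(opprB xbk xs) -(opprB xk xbk) mulNmx !dotvNr !dotvNl opprK in HX.
rewrite -(opprB xbk xs) mulNmx dotvNr in C1.
rewrite -(opprB lbk ls) -(opprB lk lbk) !dotvNr !dotvNl opprK in HL.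
have -> : xk - xs = (xbk - xs) + (xk - xbk) by rewrite [RHS]addrC addrA subrK.
have -> : lk - ls = (lbk - ls) + (lk - lbk) by rewrite [RHS]addrC addrA subrK.
have -> : xbk + (eta * xweight Phi eta xk)^-1 *: ((lk - lbk) *m Jac Phi xbk) - xs
    = (xbk - xs) + (eta * xweight Phi eta xk)^-1 *: ((lk - lbk) *m Jac Phi xbk).
  by rewrite addrAC.
have -> : dotv (xbk - xs) (ls *m Jac Phi xs) = dotv ls ((xbk - xs) *m jacobian Phi xs).
  by rewrite dotvC dotv_mulmx /Jac trmxK.
have e_aw : dotv (xbk - xs) ((lk - lbk) *m Jac Phi xbk)
    = dotv lk ((xbk - xs) *m jacobian Phi xbk) - dotv lbk ((xbk - xs) *m jacobian Phi xbk).
  by rewrite dotvC dotv_mulmx /Jac trmxK -dotvBl.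
rewrite e_aw in CB; rewrite (dotvBl lbk ls (Phi xbk)) in HL.
rewrite dotvNr (dotvBl lbk ls (Phi xs)).
set r := xweight Phi eta xk in HX CB *; set s := lweight Phi mu eta xk xbk in HL CB *.
set a := xbk - xs in HX C1 C2 CB *; set u := xk - xbk in HX *.
set b := lbk - ls in HL *; set v := lk - lbk in HL CB *.
rewrite (dotvDD a u) (dotvDD b v); rewrite (dotvC u a) in HX; rewrite (dotvC v b) in HL.
have E0 : 0 < eta^-1 by rewrite invr_gt0.
have uu : 0 <= r * dotv u u.
  by rewrite mulr_ge0 ?dotv_ge0 // /r /xweight mulr_ge0 ?sqrtr_ge0 // invr_ge0 ltW.
exact: (descent_combination HX HL (ler_wpM2l (ltW E0) C1) (ler_wpM2l (ltW E0) C2) CB uu).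
Qed.

Lemma spice_sum_descent (eta : nat -> R) (t : nat) (x : nat -> 'rV[R]_n) (lam : nat -> 'rV[R]_p)
    (xb : nat -> 'rV[R]_n) (lamb : nat -> 'rV[R]_p) xs ls :
  (forall k, 0 < eta k) ->
  (forall k, (k <= t)%N ->
     spice_step X f Phi rho mu (eta k) (x k) (lam k) (xb k) (lamb k) (x k.+1) (lam k.+1)) ->
  (forall k, (k <= t)%N -> 0 < RR Phi (x k) /\ 0 < RR Phi (xb k)) ->
  (forall k, (1 <= k <= t)%N ->
     eta k.-1 * Num.sqrt (RR Phi (x k) / RR Phi (x k.-1)) <= eta k /\
     eta k.-1 * (RR Phi (xb k) * Num.sqrt (RR Phi (x k.-1)))
       / (RR Phi (xb k.-1) * Num.sqrt (RR Phi (x k))) <= eta k) ->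
  X xs -> nonneg ls ->
  \sum_(0 <= k < t.+1) (rho * (f (xb k) - f xs)
     + (eta k)^-1 * dotv (row_mx (xb k) (lamb k) - row_mx xs ls) (Gamma Phi (row_mx xs ls)))
  <= 2^-1 * Hdist2 (xweight Phi (eta 0%N) (x 0%N)) (lweight Phi mu (eta 0%N) (x 0%N) (xb 0%N))
                   (x 0%N - xs) (lam 0%N - ls).
Proof.
move=> eta0 step pos cond Xs ls0; have mu0 : 0 < mu by apply: lt_le_trans mu_ge1.
pose H k := @Hdist2 R n p (xweight Phi (eta k) (x k)) (lweight Phi mu (eta k) (x k) (xb k)).
apply: (@sum_telescope_le _ _ (fun k => 2^-1 * H k (x k - xs) (lam k - ls))
  (fun k => 2^-1 * H k (x k.+1 - xs) (lam k.+1 - ls))).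
- move=> k kt; have [Ak Bk] := pos k kt.
  exact: spice_step_descent (eta0 k) Ak Bk (step k kt) Xs ls0.
- move=> k kt; have [Ak Bk] := pos k (ltnW kt); have [Ak1 Bk1] := pos k.+1 kt.
  have [le_x le_l] := cond k.+1 kt.
  apply: ler_wpM2l; first by rewrite invr_ge0.
  apply: Hdist2_le.
    exact: xweight_le (eta0 k) Ak Ak1 le_x.
  exact: lweight_le mu0 (eta0 k) Ak Ak1 Bk Bk1 le_l.
- apply: mulr_ge0; first by rewrite invr_ge0.
  by apply: Hdist2_ge0; [exact: xweight_ge0 | exact: lweight_ge0 (ltW mu0) _].
Qed.

End SpiceDescent.

Unset Implicit Arguments.

Theorem theorem3p3 (R : realType) (n p : nat)
  (X : set 'rV[R]_n) (f : 'rV[R]_n -> R) (Phi : 'rV[R]_n -> 'rV[R]_p)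
  (rho mu : R) (eta : nat -> R) (t : nat)
  (x : nat -> 'rV[R]_n) (lam : nat -> 'rV[R]_p)
  (xb : nat -> 'rV[R]_n) (lamb : nat -> 'rV[R]_p) :
  X !=set0 -> closed X -> convex_set X ->
  convex_fun f ->
  (forall i : 'I_p, convex_fun (fun z => Phi z 0 i)) ->
  (forall z, differentiable Phi z) -> continuous (fun z => Jac Phi z) ->
  0 < rho -> 1 < mu -> (forall k, 0 < eta k) ->
  X (x 0%N) -> nonneg (lam 0%N) ->
  (0 < t)%N ->
  (forall k, (k <= t)%N ->
     spice_step X f Phi rho mu (eta k) (x k) (lam k) (xb k) (lamb k)
                (x k.+1) (lam k.+1)) ->
  (forall k, (k <= t)%N -> 0 < RR Phi (x k) /\ 0 < RR Phi (xb k)) ->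
  (forall k, (1 <= k <= t)%N ->
     eta k.-1 * Num.sqrt (RR Phi (x k) / RR Phi (x k.-1)) <= eta k /\
     eta k.-1 * (RR Phi (xb k) * Num.sqrt (RR Phi (x k.-1)))
       / (RR Phi (xb k.-1) * Num.sqrt (RR Phi (x k))) <= eta k) ->
  let S := \sum_(0 <= k < t.+1) (eta k)^-1 in
  let xbar_t := (t.+1%:R)^-1 *: \sum_(0 <= k < t.+1) xb k in
  let eta_avg := t.+1%:R / S in
  let wbar_t := S^-1 *: \sum_(0 <= k < t.+1) ((eta k)^-1 *: row_mx (xb k) (lamb k)) in
  inOmega X wbar_t /\
  forall (xs : 'rV[R]_n) (ls : 'rV[R]_p), X xs -> nonneg ls ->
    let ws := row_mx xs ls in
    f xbar_t - f xs
      + dotv (wbar_t - ws) ((eta_avg * rho)^-1 *: Gamma Phi ws)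
    <= (2 * eta 0%N * rho * t.+1%:R)^-1
         * qnorm2 (H0mat Phi mu (x 0%N) (xb 0%N)) (ws - row_mx (x 0%N) (lam 0%N)).
Proof.
move=> _ _ convX convf convPhi diffPhi _ rho0 mu1 eta0 _ _ _ step pos cond S xbar_t eta_avg wbar_t.
have etaV0 k : 0 < (eta k)^-1 by rewrite invr_gt0 eta0.
have S0 : 0 < S by apply: sum_nat_gt0 => k _; exact: etaV0.
have T0 : 0 < t.+1%:R :> R by rewrite ltr0n.
split; first by apply: inOmega_wavg => // k kt; case: (step k kt).
move=> xs ls Xs ls0; cbv zeta; set G := Gamma Phi (row_mx xs ls).
have descent := spice_sum_descent convX convf convPhi diffPhi rho0 (ltW mu1) eta0 step pos cond Xs ls0.
rewrite big_split /= -mulr_sumr sumrB sumr_const_nat subn0 -dotv_wavgBl // in descent.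
rewrite Hdist2_weights Hdist2_distC -qnorm2_H0mat -add_row_mx -opp_row_mx in descent.
have jensen := convex_fun_avg xb t convf.
rewrite -/S -/wbar_t -/G -mulr_natr in descent; rewrite -/xbar_t in jensen.
rewrite ler_pdivlMl // in jensen.
rewrite dotvZr /eta_avg.
set F := \sum_(0 <= i < t.+1) f (xb i) in descent jensen.
set D := dotv (wbar_t - row_mx xs ls) G in descent *.
set Q := qnorm2 _ _ in descent *.
rewrite -(ler_pM2l (mulr_gt0 rho0 T0)).
have -> : rho * t.+1%:R * (f xbar_t - f xs + (t.+1%:R / S * rho)^-1 * D)
    = rho * (t.+1%:R * f xbar_t) - rho * (f xs * t.+1%:R) + S * D.
  by field; rewrite !lt0r_neq0.
have -> : rho * t.+1%:R * ((2 * eta 0%N * rho * t.+1%:R)^-1 * Q) = 2^-1 * ((eta 0%N)^-1 * Q).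
  by field; rewrite !lt0r_neq0.
have := ler_wpM2l (ltW rho0) jensen; lra.
Qed.
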